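(* If $g\in\mathcal{G}_0^\infty$ and $\mathcal{P}$ is a finite partition with positive Shannon dynamical entropy $h(\eta,\mathcal{P})>0$, then $h(g,\mathcal{P})=\infty$.
   Context: $\mathcal{G}_0$ is the set of concave functions $g:[0,1]\to\mathbb{R}$ with $g(0)=\lim_{x\to0^+}g(x)=0$. Let $\eta(x)=-x\log x$ and $\eta(0)=0$. Define $\mathcal{G}_0^\infty=\{g\in\mathcal{G}_0:\lim_{x\to0^+}g(x)/\eta(x)=\infty\}$. $T$ is a measure-preserving map of a probability space $(X,\Sigma,\mu)$. For a finite measurable partition $\mathcal{P}$, let $\mathcal{P}_n=\bigvee_{i=0}^{n-1}T^{-i}\mathcal{P}$, $H(g,\mathcal{P})=\sum_{A\in\mathcal{P}}g(\mu(A))$, and $h(g,\mathcal{P})=\limsup_{n\to\infty}\frac1nH(g,\mathcal{P}_n)$. *)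

From Stdlib Require Import Reals Lra List.
Import ListNotations.
Open Scope R_scope.

Definition is_sigma_algebra {X : Type} (Sigma : (X -> Prop) -> Prop) : Prop :=
  Sigma (fun _ => True) /\
  (forall A, Sigma A -> Sigma (fun x => ~ A x)) /\
  (forall A : nat -> (X -> Prop), (forall n, Sigma (A n)) ->
      Sigma (fun x => exists n, A n x)).

Definition is_probability_measure {X : Type} (Sigma : (X -> Prop) -> Prop)
    (mu : (X -> Prop) -> R) : Prop :=
  (forall A, Sigma A -> 0 <= mu A) /\
  mu (fun _ => True) = 1 /\
  (forall A : nat -> (X -> Prop),
      (forall n, Sigma (A n)) ->
      (forall m n x, m <> n -> A m x -> A n x -> False) ->
      infinite_sum (fun n => mu (A n)) (mu (fun x => exists n, A n x))).

Definition is_measure_preserving {X : Type} (Sigma : (X -> Prop) -> Prop)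
    (mu : (X -> Prop) -> R) (T : X -> X) : Prop :=
  forall A, Sigma A -> Sigma (fun x => A (T x)) /\ mu (fun x => A (T x)) = mu A.

Definition is_finite_partition {X : Type} (Sigma : (X -> Prop) -> Prop)
    (P : list (X -> Prop)) : Prop :=
  Forall Sigma P /\
  (forall i j x, (i < length P)%nat -> (j < length P)%nat -> i <> j ->
      nth i P (fun _ => False) x -> nth j P (fun _ => False) x -> False) /\
  (forall x, exists A, In A P /\ A x).

(* P_n = P v T^{-1}P v ... v T^{-(n-1)}P, listed as all cells
   A_0 /\ T^{-1} A_1 /\ ... /\ T^{-(n-1)} A_{n-1} (empty cells included;
   they contribute g(0) = 0). *)
Fixpoint join_iter {X : Type} (T : X -> X) (P : list (X -> Prop)) (n : nat)
    : list (X -> Prop) :=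
  match n with
  | O => [fun _ => True]
  | S k => flat_map (fun C => map (fun A => fun x => C x /\ A (Nat.iter k T x)) P)
                    (join_iter T P k)
  end.

Definition H_g {X : Type} (mu : (X -> Prop) -> R) (g : R -> R)
    (P : list (X -> Prop)) : R :=
  fold_right Rplus 0 (map (fun A => g (mu A)) P).

Definition h_seq {X : Type} (mu : (X -> Prop) -> R) (T : X -> X) (g : R -> R)
    (P : list (X -> Prop)) (n : nat) : R :=
  / INR n * H_g mu g (join_iter T P n).

(* limsup_n a_n > r  (unfolded, allowing limsup = +oo) *)
Definition limsup_gt (a : nat -> R) (r : R) : Prop :=
  exists c, c > r /\ forall N, exists n, (n >= N)%nat /\ a n > c.

Definition limsup_infty (a : nat -> R) : Prop :=
  forall M N, exists n, (n >= N)%nat /\ a n > M.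

Definition eta (x : R) : R := if Rle_dec x 0 then 0 else - x * ln x.

Definition in_G0 (g : R -> R) : Prop :=
  (forall x y t, 0 <= x <= 1 -> 0 <= y <= 1 -> 0 <= t <= 1 ->
      t * g x + (1 - t) * g y <= g (t * x + (1 - t) * y)) /\
  g 0 = 0 /\
  (forall eps, eps > 0 -> exists delta, delta > 0 /\
      forall x, 0 < x -> x < delta -> x <= 1 -> Rabs (g x) < eps).

Definition in_G0_infty (g : R -> R) : Prop :=
  in_G0 g /\
  (forall M, exists delta, delta > 0 /\
      forall x, 0 < x -> x < delta -> x <= 1 -> g x / eta x > M).

From Stdlib Require Import Reals List.
From Stdlib Require Import Lra Lia FunctionalExtensionality PropExtensionality Classical.
Import ListNotations.
Open Scope R_scope.

(* If g is in G_0^oo, then for every M >= 0 there is K with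
     g(x) >= M * eta(x) - K * x        for all x in [0,1]
   (near 0 because g/eta -> oo; away from 0 because eta(x) <= -x ln d there and
   concavity with g(0) = 0 gives g(x) >= x g(1)).  The cells of P_n are
   measurable and their measures add up to mu(X) = 1, so summing the pointwise
   bound over them gives
     (1/n) H(g, P_n) >= M (1/n) H(eta, P_n) - K/n.
   Since (1/n) H(eta, P_n) > c > 0 infinitely often, choosing M = (|M0|+1)/c
   and n large yields (1/n) H(g, P_n) > M0 infinitely often. *)

Lemma set_ext {X : Type} (A B : X -> Prop) : (forall x, A x <-> B x) -> A = B.
Proof.
  intros H; apply functional_extensionality; intros x.
  apply propositional_extensionality; auto.
Qed.

Lemma partial_sum_nth {X : Type} (mu : (X -> Prop) -> R) (L : list (X -> Prop)) :
  mu (fun _ => False) = 0 ->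
  forall n, (length L <= S n)%nat ->
  sum_f_R0 (fun k => mu (nth k L (fun _ => False))) n = fold_right Rplus 0 (map mu L).
Proof.
  intros H0. induction L as [|a L IH]; intros n Hn.
  - induction n as [|n IHn]; simpl.
    + rewrite H0; ring.
    + simpl in IHn. rewrite IHn by (simpl; lia). rewrite H0; ring.
  - destruct n as [|n].
    + simpl in Hn. destruct L; simpl in Hn; [|lia]. simpl. ring.
    + rewrite decomp_sum by lia. simpl pred.
      change (sum_f_R0 (fun i => mu (nth (S i) (a :: L) (fun _ => False))) n)
        with (sum_f_R0 (fun k => mu (nth k L (fun _ => False))) n).
      rewrite IH by (simpl in Hn; lia). simpl. ring.
Qed.

Lemma sum_flat_map {A B : Type} (h : B -> R) (f : A -> list B) (L : list A) :
  fold_right Rplus 0 (map h (flat_map f L)) =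
  fold_right Rplus 0 (map (fun C => fold_right Rplus 0 (map h (f C))) L).
Proof.
  induction L as [|a L IH]; simpl; auto.
  rewrite map_app, <- IH.
  induction (map h (f a)) as [|y l IHl]; simpl; [ring | rewrite IHl; ring].
Qed.

Section ProbabilitySpace.

Variables (X : Type) (Sigma : (X -> Prop) -> Prop) (mu : (X -> Prop) -> R).
Hypothesis Hsig : is_sigma_algebra Sigma.
Hypothesis Hprob : is_probability_measure Sigma mu.

Lemma sigma_empty : Sigma (fun _ => False).
Proof.
  destruct Hsig as [HT [HC _]].
  replace (fun _ : X => False) with (fun _ : X => ~ True) by (apply set_ext; tauto).
  apply HC, HT.
Qed.

(* Closure under binary intersection, via De Morgan and countable unions. *)
Lemma sigma_and (A B : X -> Prop) :
  Sigma A -> Sigma B -> Sigma (fun x => A x /\ B x).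
Proof.
  intros HA HB. destruct Hsig as [_ [HC HU]].
  set (C := fun n : nat => match n with O => fun x => ~ A x | _ => fun x => ~ B x end).
  assert (HCm : forall n, Sigma (C n)) by (intros [|n]; apply HC; auto).
  replace (fun x => A x /\ B x) with (fun x => ~ (exists n, C n x)) by
    (apply set_ext; intros x; split;
     [ intros H; split; apply NNPP; intros H'; apply H;
       [exists 0%nat | exists 1%nat]; exact H'
     | intros [Ha Hb] [[|n] Hn]; auto ]).
  apply HC, HU, HCm.
Qed.

(* The empty set is null: a constant series converges only if it is zero. *)
Lemma mu_empty : mu (fun _ => False) = 0.
Proof.
  destruct Hprob as [Hpos [_ Hadd]].
  specialize (Hadd (fun _ _ => False) (fun _ => sigma_empty) ltac:(intros; contradiction)).
  replace (fun x : X => exists n : nat, False) with (fun _ : X => False) in Hadd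
    by (apply set_ext; intros; split; [tauto | intros [_ []]]).
  pose proof (Hpos _ sigma_empty) as Ha.
  set (a := mu (fun _ => False)) in *.
  assert (Hconst : forall n, sum_f_R0 (fun _ => a) n = INR (S n) * a).
  { induction n as [|n IHn]; simpl sum_f_R0; [simpl; ring|].
    rewrite IHn, (S_INR (S n)). ring. }
  destruct (Req_dec a 0) as [|Hn0]; auto. exfalso.
  destruct (Hadd (a / 2)) as [N HN]; [lra|].
  pose proof (HN N (le_n _)) as A1. pose proof (HN (S N) (le_S _ _ (le_n _))) as A2.
  unfold R_dist in *. rewrite Hconst in A1, A2.
  apply Rabs_def2 in A1. apply Rabs_def2 in A2.
  rewrite (S_INR (S N)) in A2. lra.
Qed.

Lemma finite_additivity (L : list (X -> Prop)) :
  Forall Sigma L ->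
  (forall i j x, (i < length L)%nat -> (j < length L)%nat -> i <> j ->
     nth i L (fun _ => False) x -> nth j L (fun _ => False) x -> False) ->
  mu (fun x => exists A, In A L /\ A x) = fold_right Rplus 0 (map mu L).
Proof.
  intros HF Hd. destruct Hprob as [_ [_ Hadd]].
  set (D := fun n => nth n L (fun _ : X => False)).
  assert (Hm : forall n, Sigma (D n)).
  { intros n. unfold D. destruct (Nat.lt_ge_cases n (length L)).
    - rewrite Forall_forall in HF. apply HF, nth_In; auto.
    - rewrite nth_overflow by auto. apply sigma_empty. }
  assert (Hdis : forall m n x, m <> n -> D m x -> D n x -> False).
  { unfold D; intros m n x Hmn H1 H2.
    destruct (Nat.lt_ge_cases m (length L)); [|rewrite nth_overflow in H1 by auto; exact H1].
    destruct (Nat.lt_ge_cases n (length L)); [|rewrite nth_overflow in H2 by auto; exact H2].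
    eapply Hd; eauto. }
  specialize (Hadd _ Hm Hdis).
  replace (fun x => exists A, In A L /\ A x) with (fun x => exists n, D n x).
  2:{ unfold D; apply set_ext; intros x; split.
      - intros [n Hn]. destruct (Nat.lt_ge_cases n (length L)).
        + exists (nth n L (fun _ => False)); split; auto. apply nth_In; auto.
        + rewrite nth_overflow in Hn by auto; contradiction.
      - intros [A [HA Ax]]. destruct (In_nth L A (fun _ => False) HA) as [n [_ Hn]].
        exists n; rewrite Hn; auto. }
  set (l := mu (fun x => exists n, D n x)) in *.
  set (total := fold_right Rplus 0 (map mu L)).
  destruct (Req_dec l total) as [|Hne]; auto. exfalso.
  destruct (Hadd (Rabs (total - l))) as [N HN]; [apply Rabs_pos_lt; lra|].
  specialize (HN (max N (length L)) (Nat.le_max_l _ _)).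
  unfold D in HN. rewrite partial_sum_nth in HN by (apply mu_empty || lia).
  unfold R_dist in HN. fold total in HN. lra.
Qed.

(* Every measurable set has measure at most 1 (it and its complement add up). *)
Lemma mu_le_1 (A : X -> Prop) : Sigma A -> mu A <= 1.
Proof.
  intros HA. destruct Hsig as [_ [HC _]].
  assert (Hsplit := finite_additivity [A; fun x => ~ A x]).
  replace (fun x => exists B, In B [A; fun x => ~ A x] /\ B x) with (fun _ : X => True)
    in Hsplit.
  2:{ apply set_ext; intros x; split; [|auto]. intros _.
      destruct (classic (A x)); [exists A | exists (fun x => ~ A x)]; simpl; auto. }
  destruct Hprob as [Hpos [H1 _]]. rewrite H1 in Hsplit. simpl in Hsplit.
  assert (mu (fun x => ~ A x) >= 0) by (apply Rle_ge, Hpos, HC, HA).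
  enough (1 = mu A + (mu (fun x => ~ A x) + 0)) by lra.
  apply Hsplit.
  - repeat constructor; auto.
  - intros [|[|i]] [|[|j]] x Hi Hj Hij; simpl in *; try lia; tauto.
Qed.

Section Dynamics.

Variables (T : X -> X) (P : list (X -> Prop)).
Hypothesis Hmp : is_measure_preserving Sigma mu T.
Hypothesis HP : is_finite_partition Sigma P.

Lemma sigma_preimage_iter (k : nat) (A : X -> Prop) :
  Sigma A -> Sigma (fun x => A (Nat.iter k T x)).
Proof.
  revert A. induction k as [|k IH]; intros A HA; [exact HA|].
  exact (IH (fun y => A (T y)) (proj1 (Hmp A HA))).
Qed.

Lemma refine_cell_mass (C : X -> Prop) (k : nat) :
  Sigma C ->
  fold_right Rplus 0 (map mu (map (fun A => fun x => C x /\ A (Nat.iter k T x)) P)) = mu C.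
Proof.
  intros HC. destruct HP as [HPs [HPd HPc]].
  set (f := fun A : X -> Prop => fun x => C x /\ A (Nat.iter k T x)).
  rewrite <- finite_additivity.
  - f_equal. apply set_ext; intros x; split.
    + intros [A [HA Ax]]. apply in_map_iff in HA. destruct HA as [B [<- _]]. apply Ax.
    + intros Cx. destruct (HPc (Nat.iter k T x)) as [B [HB Bx]].
      exists (f B). split; [apply in_map; auto | unfold f; auto].
  - apply Forall_forall. intros A HA. apply in_map_iff in HA. destruct HA as [B [<- HB]].
    apply sigma_and; auto. apply sigma_preimage_iter.
    rewrite Forall_forall in HPs; auto.
  - intros i j x Hi Hj Hij H1 H2. rewrite length_map in Hi, Hj.
    rewrite (nth_indep _ _ (f (fun _ => False))), map_nth in H1
      by (rewrite length_map; auto).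
    rewrite (nth_indep _ _ (f (fun _ => False))), map_nth in H2
      by (rewrite length_map; auto).
    destruct H1 as [_ H1]; destruct H2 as [_ H2].
    eapply HPd; eauto.
Qed.

Lemma join_iter_measurable (n : nat) : Forall Sigma (join_iter T P n).
Proof.
  induction n as [|n IHn]; simpl.
  - constructor; [apply Hsig | constructor].
  - apply Forall_forall. intros A HA. apply in_flat_map in HA. destruct HA as [C [HC HA]].
    apply in_map_iff in HA. destruct HA as [B [<- HB]].
    rewrite Forall_forall in IHn. apply sigma_and; auto.
    apply sigma_preimage_iter. destruct HP as [HPs _]. rewrite Forall_forall in HPs; auto.
Qed.

Lemma join_iter_mass (n : nat) : fold_right Rplus 0 (map mu (join_iter T P n)) = 1.
Proof.
  induction n as [|n IHn].
  - simpl. destruct Hprob as [_ [H1 _]]. rewrite H1. ring.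
  - simpl join_iter. rewrite sum_flat_map, <- IHn. f_equal.
    apply map_ext_in. intros C HC. apply refine_cell_mass.
    pose proof (join_iter_measurable n) as HF. rewrite Forall_forall in HF; auto.
Qed.

End Dynamics.
End ProbabilitySpace.

Lemma concave_above_chord (g : R -> R) (x : R) :
  in_G0 g -> 0 <= x <= 1 -> x * g 1 <= g x.
Proof.
  intros [Hconc [H0 _]] Hx.
  pose proof (Hconc 1 0 x ltac:(lra) ltac:(lra) Hx) as Hc.
  replace (x * 1 + (1 - x) * 0) with x in Hc by ring. rewrite H0 in Hc. lra.
Qed.

Lemma eta_le_linear (d x : R) : 0 < d <= x -> eta x <= - ln d * x.
Proof.
  intros Hdx. unfold eta. destruct (Rle_dec x 0); [lra|].
  assert (ln d <= ln x)
    by (destruct (Req_dec d x) as [->|]; [lra | left; apply ln_increasing; lra]).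
  nra.
Qed.

Lemma G0_infty_dominates_eta (g : R -> R) (M : R) :
  in_G0_infty g -> 0 <= M ->
  exists K, forall x, 0 <= x <= 1 -> g x >= M * eta x - K * x.
Proof.
  intros [HG0 Hinf] HM.
  destruct (Hinf M) as [d0 [Hd0 Hd]].
  set (d := Rmin d0 (1/2)).
  assert (Hdp : 0 < d) by (unfold d; apply Rmin_glb_lt; lra).
  assert (Hdd0 : d <= d0) by apply Rmin_l.
  assert (Hd2 : d <= 1/2) by apply Rmin_r.
  exists (M * (- ln d) + Rabs (g 1)).
  intros x Hx.
  pose proof (Rabs_pos (g 1)). pose proof (Rle_abs (- g 1)). rewrite Rabs_Ropp in *.
  destruct (Rle_dec x 0) as [Hx0|Hx0].
  { replace x with 0 by lra. destruct HG0 as [_ [-> _]].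
    unfold eta. destruct (Rle_dec 0 0); lra. }
  assert (Hlnd : ln d < 0) by (rewrite <- ln_1; apply ln_increasing; lra).
  destruct (Rlt_le_dec x d) as [Hxd|Hxd].
  - (* near 0: g x > M * eta x, and eta x > 0 *)
    specialize (Hd x ltac:(lra) ltac:(lra) ltac:(lra)).
    assert (Heta : 0 < eta x).
    { unfold eta. destruct (Rle_dec x 0); [lra|].
      assert (ln x < 0) by (rewrite <- ln_1; apply ln_increasing; lra). nra. }
    assert (g x > M * eta x).
    { replace (g x) with (g x / eta x * eta x) by (field; lra).
      apply Rmult_gt_compat_r; auto. }
    assert (0 <= (M * - ln d + Rabs (g 1)) * x) by (apply Rmult_le_pos; nra).
    lra.
  - (* away from 0: eta is linear-bounded and g lies above its chord *)
    pose proof (eta_le_linear d x ltac:(lra)).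
    pose proof (concave_above_chord g x HG0 Hx).
    nra.
Qed.

Lemma sum_lower_bound {X : Type} (mu : (X -> Prop) -> R) (L : list (X -> Prop))
    (f e : R -> R) (M K : R) :
  (forall A, In A L -> f (mu A) >= M * e (mu A) - K * mu A) ->
  H_g mu f L >= M * H_g mu e L - K * fold_right Rplus 0 (map mu L).
Proof.
  unfold H_g. induction L as [|a L IH]; simpl; intros H; [lra|].
  pose proof (H a (or_introl eq_refl)).
  pose proof (IH (fun A HA => H A (or_intror HA))). lra.
Qed.

Lemma h_seq_comparison (X : Type) (Sigma : (X -> Prop) -> Prop)
    (mu : (X -> Prop) -> R) (T : X -> X) (g : R -> R) (P : list (X -> Prop)) (M : R) :
  is_sigma_algebra Sigma -> is_probability_measure Sigma mu ->
  is_measure_preserving Sigma mu T -> in_G0_infty g -> is_finite_partition Sigma P ->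
  0 <= M ->
  exists K, forall n, (0 < n)%nat ->
    h_seq mu T g P n >= M * h_seq mu T eta P n - K / INR n.
Proof.
  intros Hs Hp Hmp Hg HP HM.
  destruct (G0_infty_dominates_eta g M Hg HM) as [K HK].
  exists K. intros n Hn.
  assert (Hcell : forall A, In A (join_iter T P n) -> 0 <= mu A <= 1).
  { intros A HA. pose proof (join_iter_measurable X Sigma mu Hs T P Hmp HP n) as HF.
    rewrite Forall_forall in HF. split.
    - destruct Hp as [Hpos _]. apply Hpos; auto.
    - apply (mu_le_1 X Sigma mu Hs Hp); auto. }
  pose proof (sum_lower_bound mu _ g eta M K (fun A HA => HK _ (Hcell A HA))) as Hsum.
  rewrite (join_iter_mass X Sigma mu Hs Hp T P Hmp HP n) in Hsum.
  assert (Hnpos : 0 < INR n) by (apply lt_0_INR; lia).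
  unfold h_seq, Rdiv.
  replace (M * (/ INR n * H_g mu eta (join_iter T P n)) - K * / INR n)
    with (/ INR n * (M * H_g mu eta (join_iter T P n) - K * 1)) by ring.
  apply Rmult_ge_compat_l; [left; apply Rinv_0_lt_compat|]; lra.
Qed.

Theorem mainTheorem8 (X : Type) (Sigma : (X -> Prop) -> Prop)
    (mu : (X -> Prop) -> R) (T : X -> X) (g : R -> R) (P : list (X -> Prop)) :
  is_sigma_algebra Sigma ->
  is_probability_measure Sigma mu ->
  is_measure_preserving Sigma mu T ->
  in_G0_infty g ->
  is_finite_partition Sigma P ->
  limsup_gt (h_seq mu T eta P) 0 ->
  limsup_infty (h_seq mu T g P).
Proof.
  intros Hs Hp Hmp Hg HP [c [Hc Hinf]] M0 N0.
  set (M := (Rabs M0 + 1) / c).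
  assert (HMc : M * c = Rabs M0 + 1) by (unfold M; field; lra).
  assert (HM : 0 < M) by (unfold M; apply Rdiv_lt_0_compat; [pose proof (Rabs_pos M0)|]; lra).
  destruct (h_seq_comparison X Sigma mu T g P M Hs Hp Hmp Hg HP ltac:(lra)) as [K HK].
  (* take n >= N0 with n > |K| and (1/n) H(eta,P_n) > c *)
  destruct (INR_unbounded (Rabs K)) as [N1 HN1].
  destruct (Hinf (max N0 (S N1))) as [n [Hn Hh]].
  exists n. split; [lia|].
  assert (HnN : INR N1 < INR n) by (apply lt_INR; lia).
  specialize (HK n ltac:(lia)).
  assert (HKn : K / INR n < 1).
  { pose proof (Rle_abs K). pose proof (pos_INR N1).
    replace 1 with (INR n / INR n) by (field; lra).
    apply Rmult_lt_compat_r; [apply Rinv_0_lt_compat|]; lra. }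
  assert (M * h_seq mu T eta P n > M * c) by (apply Rmult_gt_compat_l; lra).
  pose proof (Rle_abs M0). lra.
Qed.
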